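(* Let $\Gamma$ be a finite group and $\mathbf{E}=\bigoplus_{w\in\Gamma}\mathbf{E}_w$ a finite-dimensional associative $\bar{\mathbb{Q}}_l$-algebra with $1$, with $\dim\mathbf{E}_w=1$ and $\mathbf{E}_w\mathbf{E}_y=\mathbf{E}_{wy}$; choose basis elements $b_w\in\mathbf{E}_w$. Let $\iota:\mathbf{E}\to\mathbf{E}$ be an algebra automorphism. Let $V_1,\dots,V_{r'}$ be representatives of the isomorphism classes of simple $\mathbf{E}$-modules, numbered so that exactly for $i\in[1,r]$ there exists a $\bar{\mathbb{Q}}_l$-linear isomorphism $\iota_i:V_i\to V_i$ with $\iota_i(ev)=\iota(e)\iota_i(v)$ for all $e\in\mathbf{E}$, $v\in V_i$; fix such $\iota_i$ for $i\in[1,r]$. Then for any $w,w'\in\Gamma$, $\sum_{i=1}^r\mathrm{tr}(b_w\iota_i,V_i)\,\mathrm{tr}(\iota_i^{-1}b_{w'}^{-1},V_i)$ equals the trace of the linear map $\kappa:\mathbf{E}\to\mathbf{E}$, $e\mapsto b_{w'}^{-1}\iota^{-1}(e)b_w$. *)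

From HB Require Import structures.
From mathcomp Require Import all_boot all_order all_algebra all_fingroup all_field.
Set Implicit Arguments. Unset Strict Implicit. Unset Printing Implicit Defensive.
Import GRing.Theory.
Local Open Scope ring_scope.

Definition vtrace (F : fieldType) (V : vectType F) (f : 'End(V)) : F :=
  \tr (passmx.mxof (vbasis {:V}) (vbasis {:V}) f).

Record Emod (F : fieldType) (E : falgType F) := EMod {
  mcarrier :> vectType F;
  Eact : E -> 'End(mcarrier)
}.

Definition is_Emod (F : fieldType) (E : falgType F) (M : Emod E) : Prop :=
  [/\ linear (@Eact F E M),
      Eact M 1 = \1%VF &
      forall x y, Eact M (x * y) = (Eact M x \o Eact M y)%VF].

Definition simple_Emod (F : fieldType) (E : falgType F) (M : Emod E) : Prop :=
  [/\ is_Emod M,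
      (0 < \dim (fullv : {vspace M}))%N &
      forall U : {vspace M}, (forall e, (Eact M e @: U <= U)%VS) ->
         U = 0%VS \/ U = fullv].

Definition lbij (F : fieldType) (V W : vectType F) (f : 'Hom(V, W)) : Prop :=
  lker f = 0%VS /\ limg f = fullv.

Definition Emod_iso (F : fieldType) (E : falgType F) (M N : Emod E) : Prop :=
  exists f : 'Hom(M, N), lbij f /\
    forall e, (f \o Eact M e)%VF = (Eact N e \o f)%VF.

Definition twisting (F : fieldType) (E : falgType F) (iota : E -> E)
    (M : Emod E) (j : 'End(M)) : Prop :=
  lbij j /\ forall e, (j \o Eact M e)%VF = (Eact M (iota e) \o j)%VF.

(* The b_y span E and multiply like Gamma up to nonzero scalars, so averaging
   g |-> sum_y rho'(b_y) g rho(b_y^-1) turns every linear map between two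
   E-modules into a module map.  By Schur's lemma the average is 0 between
   non-isomorphic simple modules and (|Gamma| / dim V) tr(g) on a simple V.
   The same averaging proves Maschke's theorem, so E acts faithfully on its
   simple modules, and the orthogonality relations give the expansion
   e = sum_y tau(b_y^-1 e) b_y with tau = |Gamma|^-1 sum_j dim V_j tr(-, V_j).
   Computing tr(kappa) in this "basis" yields
   |Gamma|^-1 sum_j dim V_j tr(A_j(rho_j(b_w)) rho_j(b_w'^-1), V_j), where A_j
   averages from V_j to its twist by iota.  Schur's lemma once more makes A_j
   vanish unless V_j is isomorphic to its twist (j < r), and then
   A_j(g) = (|Gamma| / dim V_j) tr(iota_j g) iota_j^-1. *)

From HB Require Import structures.
From mathcomp Require Import all_boot all_order all_algebra all_fingroup all_field.
From mathcomp Require Import zify ring.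
From Stdlib Require Import Classical.
Import GRing.Theory passmx.
Local Open Scope ring_scope.

Set Implicit Arguments.
Unset Strict Implicit.
Unset Printing Implicit Defensive.

Lemma linfunE (F : fieldType) (aT rT : vectType F) (f : aT -> rT) :
  linear f -> linfun f =1 f.
Proof.
move=> fL; exact: (lfunE (HB.pack f (GRing.isLinear.Build F aT rT _ f fL))).
Qed.

Lemma lbijV (F : fieldType) (V : vectType F) (Q : 'End(V)) : lbij Q ->
  [/\ lbij Q^-1%VF, (Q^-1 \o Q = \1)%VF & (Q \o Q^-1 = \1)%VF].
Proof.
move=> [kerQ imQ]; have kerQ0 : lker Q == 0%VS by rewrite kerQ.
have kerQV0 : lker Q^-1%VF == 0%VS.
  by apply/lker0P => u v QVuv; rewrite -(lker0_lfunVK kerQ0 u) QVuv lker0_lfunVK.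
split; [split; [exact/eqP | exact: lker0_limgf] | exact: lker0_compVf | exact: lker0_compfV].
Qed.

Lemma comp_lfun_sumr (F : fieldType) (U V W : vectType F) (f : 'Hom(V, W))
    I (r : seq I) (P : pred I) (G : I -> 'Hom(U, V)) :
  (f \o \sum_(i <- r | P i) G i = \sum_(i <- r | P i) (f \o G i))%VF.
Proof. by elim/big_rec2: _ => [|i x y _ <-]; rewrite ?comp_lfun0r ?comp_lfunDr. Qed.

Lemma comp_lfun_suml (F : fieldType) (U V W : vectType F) (g : 'Hom(U, V))
    I (r : seq I) (P : pred I) (G : I -> 'Hom(V, W)) :
  ((\sum_(i <- r | P i) G i) \o g = \sum_(i <- r | P i) (G i \o g))%VF.
Proof. by elim/big_rec2: _ => [|i x y _ <-]; rewrite ?comp_lfun0l ?comp_lfunDl. Qed.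

Lemma vtrace_is_scalar (F : fieldType) (V : vectType F) : scalar (@vtrace F V).
Proof. by move=> a f g; rewrite /vtrace mxof_linear mxtraceD mxtraceZ. Qed.

HB.instance Definition _ (F : fieldType) (V : vectType F) :=
  GRing.isLinear.Build F 'End(V) F _ (@vtrace F V) (@vtrace_is_scalar F V).

Section Trace.
Variables (F : fieldType) (V : vectType F).
Local Notation e := (vbasis {:V}).
Implicit Types f g : 'End(V).

Lemma vtraceE f : vtrace f = \sum_(i < \dim {:V}) coord e i (f e`_i).
Proof.
rewrite /vtrace /mxtrace; apply: eq_bigr => i _.
by rewrite /mxof !mxE /= vecof_delta.
Qed.

Lemma vtrace_comp f g : vtrace (f \o g)%VF = vtrace (g \o f)%VF.
Proof. by rewrite /vtrace !(mxof_comp _ _ (vbasisP _)) mxtrace_mulC. Qed.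

Lemma vtrace1 : vtrace (\1%VF : 'End(V)) = (\dim {:V})%:R.
Proof. by rewrite /vtrace mxof1 ?(basis_free (vbasisP _)) // mxtrace1. Qed.

Lemma vtrace_frame (I : finType) (x : I -> V) (phi : I -> V -> F) f :
    (forall i, scalar (phi i)) -> (forall v, \sum_i phi i v *: x i = v) ->
  vtrace f = \sum_i phi i (f (x i)).
Proof.
move=> phiL phiK.
pose Phi i : {scalar V} := HB.pack (phi i) (GRing.isLinear.Build _ _ _ _ _ (phiL i)).
transitivity (\sum_i Phi i (f (x i))); last by [].
rewrite vtraceE.
transitivity (\sum_(k < \dim {:V}) \sum_i coord e k (x i) * Phi i (f e`_k)).
  apply: eq_bigr => k _; rewrite -{1}[f _]phiK linear_sum.
  by apply: eq_bigr => i _; rewrite linearZ /= mulrC.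
rewrite exchange_big; apply: eq_bigr => i _.
rewrite [in RHS](coord_vbasis (memvf (x i))) linear_sum (linear_sum (Phi i)).
by apply: eq_bigr => k _; rewrite !linearZ.
Qed.

Definition rank1 {W : vectType F} (l : 'I_(\dim {:V})) (u : W) : 'Hom(V, W) :=
  linfun (fun v => coord e l v *: u).

Lemma rank1E {W : vectType F} l (u : W) v : rank1 l u v = coord e l v *: u.
Proof. by rewrite linfunE // => a v1 v2; rewrite linearP scalerDl scalerA. Qed.

Lemma vtrace_rank1 l (u : V) : vtrace (rank1 l u) = coord e l u.
Proof.
have coord_e (k m : 'I_(\dim {:V})) : coord e k e`_m = (m == k)%:R.
  by rewrite coord_free ?(basis_free (vbasisP _)).
rewrite vtraceE (bigD1 l) //= big1 => [|m neq_ml]; rewrite rank1E linearZ /= coord_e.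
  by rewrite eqxx mul1r addr0.
by rewrite (negPf neq_ml) mul0r.
Qed.

End Trace.

(** * Schur's lemma *)

Definition act_irreducible (F : fieldType) (A : Type) (M : vectType F)
    (al : A -> 'End(M)) :=
  forall U : {vspace M}, (forall a, (al a @: U <= U)%VS) -> U = 0%VS \/ U = fullv.

Lemma schur (F : fieldType) (A : Type) (M N : vectType F)
    (al : A -> 'End(M)) (be : A -> 'End(N)) {Q : 'Hom(M, N)} :
    act_irreducible al -> act_irreducible be ->
    (forall a, be a \o Q = Q \o al a)%VF ->
  Q = 0 \/ lbij Q.
Proof.
move=> al_irr be_irr Q_hom.
have ker_stable a : (al a @: lker Q <= lker Q)%VS.
  apply/subvP => _ /memv_imgP [v + ->]; rewrite !memv_ker => /eqP Qv0.
  by rewrite -comp_lfunE -Q_hom comp_lfunE Qv0 linear0.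
have img_stable a : (be a @: limg Q <= limg Q)%VS.
  apply/subvP => _ /memv_imgP [_ /memv_imgP [v _ ->] ->].
  by rewrite -comp_lfunE Q_hom comp_lfunE memv_img ?memvf.
have [kerQ0|kerQT] := al_irr _ ker_stable; last first.
  by left; apply/lfunP => v; rewrite zero_lfunE; apply/eqP; rewrite -memv_ker kerQT memvf.
have [imQ0|imQT] := be_irr _ img_stable; last by right.
by left; apply/lfunP => v; rewrite zero_lfunE; apply/eqP; rewrite -memv0 -imQ0 memv_img ?memvf.
Qed.

Section ClosedField.
Variables (F : closedFieldType) (V : vectType F).

Lemma lfun_eigenvector (Q : 'End(V)) : (0 < \dim {:V})%N ->
  exists a, exists2 v, v != 0 & Q v = a *: v.
Proof.
move=> dimV_gt0; pose A := mxof (vbasis {:V}) (vbasis {:V}) Q.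
have : size (char_poly A) != 1%N by rewrite size_char_poly; case: (\dim {:V}) dimV_gt0.
case/closed_rootP => a; rewrite -eigenvalue_root_char => /eigenvalueP [w wA w_neq0].
exists a, (vecof (vbasis {:V}) w); first by rewrite vecof_eq0 ?vbasisP.
by rewrite (hom_vecof _ (vbasisP _)) wA linearZ.
Qed.

Lemma schur_scalar (A : Type) (al : A -> 'End(V)) (Q : 'End(V)) :
    act_irreducible al -> (0 < \dim {:V})%N ->
    (forall a, al a \o Q = Q \o al a)%VF ->
  exists c, Q = c *: \1%VF.
Proof.
move=> al_irr dimV_gt0 Q_hom.
have [c [v v_neq0 Qv]] := lfun_eigenvector Q dimV_gt0; exists c.
have Qc_hom a : (al a \o (Q - c *: \1) = (Q - c *: \1) \o al a)%VF.
  rewrite comp_lfunDr comp_lfunDl comp_lfunNr comp_lfunNl.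
  by rewrite -!comp_lfunZr -!comp_lfunZl comp_lfun1l comp_lfun1r Q_hom.
have [/eqP|[kerQc _]] := schur al_irr al_irr Qc_hom; first by rewrite subr_eq0 => /eqP.
have : v \in lker (Q - c *: \1%VF).
  by rewrite memv_ker add_lfunE opp_lfunE scale_lfunE id_lfunE Qv subrr.
by rewrite kerQc memv0 (negPf v_neq0).
Qed.

End ClosedField.

Section LeftIdeals.
Variables (F : fieldType) (E : falgType F).
Implicit Types U S C : {vspace E}.

Definition lideal U := forall e v, v \in U -> e * v \in U.

Definition minimal_lideal S :=
  [/\ lideal S, S != 0%VS & forall U, lideal U -> (U <= S)%VS -> U = 0%VS \/ U = S].

Definition lideal_module S : Emod E :=
  @EMod F E (subvs_of S) (fun e => linfun (vsproj S) \o amull e \o linfun vsval)%VF.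

Lemma lideal_moduleE S e v : Eact (lideal_module S) e v = vsproj S (e * vsval v).
Proof. by rewrite /= !comp_lfunE !lfunE. Qed.

Lemma lideal_module_is_Emod S : lideal S -> is_Emod (lideal_module S).
Proof.
move=> S_lideal; split.
- move=> a e1 e2; apply/lfunP => v.
  by rewrite add_lfunE scale_lfunE !lideal_moduleE mulrDl -scalerAl linearP.
- by apply/lfunP => v; rewrite id_lfunE lideal_moduleE mul1r vsvalK.
- move=> e1 e2; apply/lfunP => v; rewrite comp_lfunE !lideal_moduleE.
  by rewrite vsprojK ?mulrA // S_lideal // subvsP.
Qed.

Lemma lideal_module_simple S : minimal_lideal S -> simple_Emod (lideal_module S).
Proof.
case=> S_lideal S_neq0 S_min; split; first exact: lideal_module_is_Emod.
  by rewrite dimvf /= lt0n dimv_eq0.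
move=> U U_stable; pose incl := linfun (@vsval _ _ S).
have incl_inj : lker incl == 0%VS.
  by apply/lker0P => u1 u2; rewrite !lfunE; apply: subvs_inj.
have U'_lideal : lideal (incl @: U)%VS.
  move=> e _ /memv_imgP [u uU ->]; rewrite lfunE /=.
  have -> : e * vsval u = incl (Eact (lideal_module S) e u).
    by rewrite lideal_moduleE lfunE /= vsprojK // S_lideal // subvsP.
  by rewrite memv_img // (subvP (U_stable e)) // memv_img.
have sU'S : (incl @: U <= S)%VS.
  by apply/subvP => _ /memv_imgP [u _ ->]; rewrite lfunE subvsP.
have dimU' : \dim (incl @: U) = \dim U.
  by apply: limg_dim_eq; rewrite (eqP incl_inj) capv0.
have [U'0|U'S] := S_min _ U'_lideal sU'S.
  by left; apply/eqP; rewrite -dimv_eq0 -dimU' U'0 dimv0.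
by right; apply/eqP; rewrite eqEdim subvf dimvf /= -dimU' U'S.
Qed.

Lemma minimal_lideal_exists C : lideal C -> C != 0%VS ->
  exists2 S, minimal_lideal S & (S <= C)%VS.
Proof.
have [k] := ubnP (\dim C); elim: k C => // k IH C dimC_le C_lideal C_neq0.
case: (classic (exists U, [/\ lideal U, U != 0%VS, (U <= C)%VS & U != C])).
  case=> U [U_lideal U_neq0 sUC U_neqC].
  have dimUC : (\dim U < \dim C)%N by move: U_neqC; rewrite eqEdim sUC -ltnNge.
  have [S S_min sSU] := IH U (leq_trans dimUC dimC_le) U_lideal U_neq0.
  by exists S => //; apply: subv_trans sUC.
move=> no_proper; exists C => //; split => // U U_lideal sUC.
have [->|U_neq0] := eqVneq U 0%VS; [by left | right].
by apply/eqP/negPn/negP => U_neqC; apply: no_proper; exists U.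
Qed.

Lemma amull_comp (x y : E) : amull (x * y) = (amull x \o amull y)%VF.
Proof. by apply/lfunP => v; rewrite comp_lfunE !lfunE /= mulrA. Qed.

End LeftIdeals.

Section Emod.
Variables (F : fieldType) (E : falgType F) (M : Emod E).

Lemma simple_Emod_is_Emod : simple_Emod M -> is_Emod M.
Proof. by case. Qed.

Lemma Emod_act_linear : is_Emod M -> linear (Eact M).
Proof. by case. Qed.

Definition Emod_lact (HM : is_Emod M) : {linear E -> 'End(M)} :=
  HB.pack (Eact M) (GRing.isLinear.Build F E 'End(M) _ (Eact M) (Emod_act_linear HM)).

End Emod.

(** * Twisted group algebras *)

Section TwistedGroupAlgebra.
Variables (F : fieldType) (gT : finGroupType) (E : falgType F).
Variable Ew : gT -> {vspace E}.
Hypotheses (dimEw : forall w, \dim (Ew w) = 1%N)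
  (sumEw : (\sum_w Ew w)%VS = fullv)
  (mulEw : forall w y, (Ew w * Ew y)%VS = Ew (w * y)%g).
Variable b : gT -> E.
Hypotheses (bE : forall w, b w \in Ew w) (bnz : forall w, b w != 0).

Lemma Ew_vline w : Ew w = <[b w]>%VS.
Proof. by apply/eqP; rewrite eq_sym eqEdim -memvE bE dimEw dim_vline bnz. Qed.

Lemma gbasis_span e : exists c : gT -> F, e = \sum_w c w *: b w.
Proof.
have /memv_sumP [v vE ->] : e \in (\sum_w Ew w)%VS by rewrite sumEw memvf.
have /all_sig [c cP] w : {c : F | v w = c *: b w}.
  by apply/sig_eqW/vlineP; rewrite -Ew_vline vE.
by exists c; apply: eq_bigr => w _.
Qed.

Lemma gbasis_mul w y : exists2 c, c != 0 & b w * b y = c *: b (w * y)%g.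
Proof.
have : b w * b y \in Ew (w * y)%g by rewrite -mulEw memv_mul.
rewrite Ew_vline => /vlineP [c bwy]; exists c => //.
apply: contraTneq isT => c0.
have : \dim <[b w * b y]> = 1%N by rewrite -prodv_line -!Ew_vline mulEw dimEw.
by rewrite bwy c0 scale0r dim_vline eqxx.
Qed.

Lemma gbasis1 : exists2 m, m != 0 & b 1%g = m *: 1.
Proof.
have [m m_neq0 b11] := gbasis_mul 1%g 1%g; rewrite mulg1 in b11.
have b1w w : b 1%g * b w = m *: b w.
  have [c c_neq0 b1w] := gbasis_mul 1%g w; rewrite mul1g in b1w.
  have : b 1%g * (b 1%g * b w) = (b 1%g * b 1%g) * b w by rewrite mulrA.
  rewrite {1}b1w b11 -scalerAr b1w -scalerAl b1w !scalerA => /eqP.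
  rewrite -subr_eq0 -scalerBl scaler_eq0 (negPf (bnz w)) orbF subr_eq0.
  by rewrite mulrC => /eqP /(mulIf c_neq0) ->.
exists m => //; rewrite -[LHS]mulr1.
have [c ->] := gbasis_span 1.
rewrite mulr_sumr scaler_sumr; apply: eq_bigr => w _.
by rewrite -scalerAr b1w !scalerA mulrC.
Qed.

Lemma gbasis_unit w : b w \is a GRing.unit.
Proof.
have [m m_neq0 b1] := gbasis1.
have [c c_neq0 bwV] := gbasis_mul w w^-1%g; rewrite mulgV b1 scalerA in bwV.
have [c' c'_neq0 bVw] := gbasis_mul w^-1%g w; rewrite mulVg b1 scalerA in bVw.
have cc' : c * m = c' * m.
  have : b w * (b w^-1%g * b w) = (b w * b w^-1%g) * b w by rewrite mulrA.
  rewrite bwV bVw -scalerAr -scalerAl mulr1 mul1r => /eqP.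
  by rewrite -subr_eq0 -scalerBl scaler_eq0 (negPf (bnz w)) orbF subr_eq0 => /eqP.
have cm_neq0 : c * m != 0 by rewrite mulf_neq0.
apply/GRing.unitrP; exists ((c * m)^-1 *: b w^-1%g); split.
  by rewrite -scalerAl bVw -cc' scalerA mulVf // scale1r.
by rewrite -scalerAr bwV scalerA mulVf // scale1r.
Qed.

Section Averaging.
Variables (M N : vectType F) (al : {linear E -> 'End(M)}) (be : {linear E -> 'End(N)}).
Hypotheses (alM : forall x y, al (x * y) = (al x \o al y)%VF)
  (beM : forall x y, be (x * y) = (be x \o be y)%VF).

Definition avg (g : 'Hom(M, N)) : 'Hom(M, N) :=
  \sum_y (be (b y) \o g \o al (b y)^-1%R)%VF.

Lemma avg_hom g e : (be e \o avg g = avg g \o al e)%VF.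
Proof.
suff avg_hom_b z : (be (b z) \o avg g = avg g \o al (b z))%VF.
  have [c ->] := gbasis_span e.
  rewrite !linear_sum comp_lfun_suml comp_lfun_sumr; apply: eq_bigr => z _.
  by rewrite !linearZ -comp_lfunZl -comp_lfunZr avg_hom_b.
rewrite comp_lfun_sumr comp_lfun_suml [in RHS](reindex_inj (mulgI z)) /=.
apply: eq_bigr => y _; have [c c_neq0 bzy] := gbasis_mul z y.
have -> : (b y)^-1 = c^-1 *: ((b (z * y)%g)^-1 * b z).
  have -> : b (z * y)%g = c^-1 *: (b z * b y) by rewrite bzy scalerA mulVf ?scale1r.
  rewrite invrZ ?unitfE ?invr_neq0 ?unitrMl ?gbasis_unit // invrK invrM ?gbasis_unit //.
  by rewrite -scalerAl scalerA mulVf // scale1r mulrVK ?gbasis_unit.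
rewrite linearZ alM !comp_lfunA -beM bzy linearZ.
by rewrite -comp_lfunZr -!comp_lfunZl scalerA mulVf // scale1r !comp_lfunA.
Qed.

Lemma avg_trace_rank1 (A : 'End(M)) (u : N) :
  \sum_y vtrace (al (b y)^-1%R \o A)%VF *: be (b y) u =
  \sum_(l < \dim {:M}) avg (rank1 l u) (A (vbasis {:M})`_l).
Proof.
under eq_bigr do rewrite vtraceE scaler_suml.
rewrite exchange_big; apply: eq_bigr => l _.
rewrite sum_lfunE; apply: eq_bigr => y _.
by rewrite !comp_lfunE rank1E linearZ.
Qed.

End Averaging.

Hypothesis order_neq0 : #|gT|%:R != 0 :> F.

(* Maschke: averaging a projection onto [W] gives an E-linear one. *)
Lemma lideal_complement (W : {vspace E}) : lideal W -> W != fullv ->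
  exists C, [/\ lideal C, C != 0%VS & (W :&: C = 0)%VS].
Proof.
move=> W_lideal W_neqT; pose pi := avg (@amull F E) (@amull F E) (projv W).
have pi_hom e : (amull e \o pi = pi \o amull e)%VF.
  by apply: avg_hom; apply: amull_comp.
have piE v : pi v = \sum_y b y * projv W ((b y)^-1 * v).
  by rewrite sum_lfunE; apply: eq_bigr => y _; rewrite !comp_lfunE !lfunE.
have piW w : w \in W -> pi w = #|gT|%:R *: w.
  move=> wW; rewrite piE (eq_bigr (fun=> w)) ?sumr_const ?scaler_nat // => y _.
  by rewrite projv_id ?mulVKr ?gbasis_unit ?W_lideal.
have imW v : pi v \in W.
  by rewrite piE memv_suml // => y _; rewrite W_lideal ?memv_proj.
exists (lker pi); split.
- move=> e v; rewrite !memv_ker => /eqP piv0.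
  by have /lfunP/(_ v) := pi_hom e; rewrite !comp_lfunE !lfunE /= piv0 mulr0 => <-.
- apply: contra W_neqT => /eqP ker0.
  have := limg_ker_dim pi fullv; rewrite capfv ker0 dimv0 add0n => dim_img.
  rewrite eqEdim subvf /= -dim_img dimvS //.
  by apply/subvP => _ /memv_imgP [v _ ->].
- apply/eqP; rewrite -subv0; apply/subvP => v /memv_capP [vW]; rewrite memv_ker.
  by rewrite piW // scaler_eq0 (negPf order_neq0) memv0.
Qed.

Lemma simple_Emod_faithful x :
  (forall M : Emod E, simple_Emod M -> Eact M x = 0) -> x = 0.
Proof.
move=> x_ann.
have x_ann_minimal S v : minimal_lideal S -> v \in S -> x * v = 0.
  move=> S_min vS; have [S_lideal _ _] := S_min.
  have /lfunP/(_ (vsproj S v)) := x_ann _ (lideal_module_simple S_min).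
  rewrite lideal_moduleE zero_lfunE vsprojK // => /(congr1 val) /= xv0.
  by rewrite -(vsprojK (S_lideal x v vS)) xv0.
suff /(_ 1) : forall v, x * v = 0 by rewrite mulr1.
suff ann_full U : lideal U -> (forall v, v \in U -> x * v = 0) -> forall v, x * v = 0.
  by apply: (ann_full 0%VS) => [e v|v]; rewrite memv0 => /eqP->; rewrite ?mulr0 ?mem0v.
have [k] := ubnP (\dim {:E} - \dim U)%N.
elim: k U => // k IH U codimU U_lideal U_ann.
have [UT|U_neqT] := eqVneq U fullv; first by move=> v; rewrite U_ann // UT memvf.
have [C [C_lideal C_neq0 UC0]] := lideal_complement U_lideal U_neqT.
have [S S_min sSC] := minimal_lideal_exists C_lideal C_neq0.
have [S_lideal S_neq0 _] := S_min.
have US0 : (U :&: S = 0)%VS by apply/eqP; rewrite -subv0 -UC0 capvS.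
apply: (IH (U + S)%VS).
- have := dimv_disjoint_sum US0; have := dimvS (subvf (U + S)%VS).
  by move: S_neq0; rewrite -dimv_eq0; lia.
- move=> e _ /memv_addP [u uU [s sS ->]].
  by rewrite mulrDr memv_add ?U_lideal ?S_lideal.
- move=> _ /memv_addP [u uU [s sS ->]].
  by rewrite mulrDr U_ann // (x_ann_minimal S) // addr0.
Qed.

End TwistedGroupAlgebra.

(** * Orthogonality relations *)

Section Orthogonality.
Variables (F : closedFieldType) (gT : finGroupType) (E : falgType F).
Hypothesis charF0 : [pchar F] =i pred0.
Variable Ew : gT -> {vspace E}.
Hypotheses (dimEw : forall w, \dim (Ew w) = 1%N)
  (sumEw : (\sum_w Ew w)%VS = fullv)
  (mulEw : forall w y, (Ew w * Ew y)%VS = Ew (w * y)%g).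
Variable b : gT -> E.
Hypotheses (bE : forall w, b w \in Ew w) (bnz : forall w, b w != 0).
Variables (r' : nat) (V : 'I_r' -> Emod E).
Hypotheses (Vsimple : forall i, simple_Emod (V i))
  (Vnoniso : forall i j, Emod_iso (V i) (V j) -> i = j)
  (Vall : forall M : Emod E, simple_Emod M -> exists i, Emod_iso M (V i)).

Definition rho i := Emod_lact (simple_Emod_is_Emod (Vsimple i)).
Local Notation n := (#|gT|%:R : F).
Local Notation d i := ((\dim {:V i})%:R : F).
Let b_unit := gbasis_unit dimEw sumEw mulEw bE bnz.

Lemma rhoM i x y : rho i (x * y) = (rho i x \o rho i y)%VF.
Proof. by have [[_ _ actM] _ _] := Vsimple i; apply: actM. Qed.

Lemma rho1 i : rho i 1 = \1%VF.
Proof. by have [[_ act1 _] _ _] := Vsimple i; apply: act1. Qed.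

Lemma rho_irr i : act_irreducible (rho i).
Proof. by have [] := Vsimple i. Qed.

Lemma dimV_gt0 i : (0 < \dim {:V i})%N.
Proof. by have [] := Vsimple i. Qed.

Lemma order_neq0 : n != 0.
Proof. by rewrite ((pcharf0P _).1 charF0) -lt0n; apply/card_gt0P; exists 1%g. Qed.

Lemma dimV_neq0 i : d i != 0.
Proof. by rewrite ((pcharf0P _).1 charF0) -lt0n dimV_gt0. Qed.

Lemma avg_orth_neq i j (g : 'Hom(V i, V j)) : i != j -> avg b (rho i) (rho j) g = 0.
Proof.
move=> neq_ij; have g_hom := avg_hom dimEw sumEw mulEw bE bnz (rhoM i) (rhoM j) g.
have [//|g_bij] := schur (@rho_irr i) (@rho_irr j) g_hom.
suff /Vnoniso/eqP : Emod_iso (V i) (V j) by rewrite (negPf neq_ij).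
by exists (avg b (rho i) (rho j) g); split => // e; rewrite g_hom.
Qed.

Lemma avg_orth_eq i (g : 'End(V i)) :
  avg b (rho i) (rho i) g = (n / d i * vtrace g) *: \1%VF.
Proof.
have [c avg_c] :=
  schur_scalar (@rho_irr i) (dimV_gt0 i) (avg_hom dimEw sumEw mulEw bE bnz (rhoM i) (rhoM i) g).
have tr_avg : vtrace (avg b (rho i) (rho i) g) = n * vtrace g.
  rewrite linear_sum /= (eq_bigr (fun=> vtrace g)) ?sumr_const ?mulr_natl // => y _.
  by rewrite vtrace_comp comp_lfunA -rhoM mulVr ?b_unit // rho1 comp_lfun1l.
rewrite avg_c; congr (_ *: _); move: tr_avg; rewrite avg_c linearZ /= vtrace1 => c_d.
by apply: (mulIf (dimV_neq0 i)); rewrite c_d mulrAC divfK ?dimV_neq0.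
Qed.

Lemma rho_orthogonality j k e (u : V k) :
  \sum_y vtrace (rho j ((b y)^-1 * e)) *: rho k (b y) u =
  if j == k then (n / d k) *: rho k e u else 0.
Proof.
under eq_bigr do rewrite rhoM.
rewrite avg_trace_rank1; have [eq_jk|neq_jk] := eqVneq j k; last first.
  by rewrite big1 // => l _; rewrite avg_orth_neq // zero_lfunE.
subst k.
under eq_bigr do rewrite avg_orth_eq scale_lfunE id_lfunE vtrace_rank1 -scalerA.
rewrite {2}(coord_vbasis (memvf u)) linear_sum -scaler_sumr.
by congr (_ *: _); apply: eq_bigr => l _; rewrite linearZ.
Qed.

(* By Wedderburn, [tau e] is the trace of [e] on the regular module divided by
   |Gamma|, i.e. the coefficient of [1] in [e]; only [tau_frame] is used. *)
Definition tau e := n^-1 * \sum_j d j * vtrace (rho j e).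

Lemma tau_is_scalar : scalar tau.
Proof.
move=> a u v; rewrite /tau mulrCA -mulrDr; congr (_ * _).
rewrite mulr_sumr -big_split; apply: eq_bigr => j _.
by rewrite linearP linearP mulrDr mulrCA.
Qed.

Lemma rho_faithful x : (forall k, rho k x = 0) -> x = 0.
Proof.
move=> rho_x0; apply: (simple_Emod_faithful dimEw sumEw mulEw bE bnz order_neq0).
move=> M M_simple; have [i [f [[/eqP/lker0P f_inj _] f_hom]]] := Vall M_simple.
apply/lfunP => v; rewrite zero_lfunE; apply: f_inj.
by rewrite linear0 -comp_lfunE f_hom comp_lfunE [Eact _ x]rho_x0 zero_lfunE.
Qed.

Lemma tau_frame e : \sum_y tau ((b y)^-1 * e) *: b y = e.
Proof.
apply/eqP; rewrite -subr_eq0; apply/eqP/rho_faithful => k.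
rewrite linearB linear_sum; apply/eqP; rewrite subr_eq0; apply/eqP/lfunP => u.
rewrite sum_lfunE; under eq_bigr do rewrite linearZ /= scale_lfunE.
transitivity (n^-1 *: \sum_j d j *: \sum_y vtrace (rho j ((b y)^-1 * e)) *: rho k (b y) u).
  rewrite [RHS]scaler_sumr; under [RHS]eq_bigr do rewrite !scaler_sumr.
  rewrite [RHS]exchange_big; apply: eq_bigr => y _.
  rewrite /tau -scalerA scaler_suml scaler_sumr; apply: eq_bigr => j _.
  by rewrite [d j *: _]scalerA.
under eq_bigr do rewrite rho_orthogonality.
rewrite (bigD1 k) //= eqxx big1 ?addr0 => [|j /negPf->]; last by rewrite scaler0.
rewrite !scalerA -[RHS]scale1r; congr (_ *: _).
by field; rewrite order_neq0 dimV_neq0.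
Qed.

Lemma vtrace_tau (kappa : 'End(E)) :
  vtrace kappa = \sum_y tau ((b y)^-1 * kappa (b y)).
Proof.
apply: (vtrace_frame (phi := fun y e => tau ((b y)^-1 * e))); last exact: tau_frame.
by move=> y a u v; rewrite mulrDr -scalerAr tau_is_scalar.
Qed.

Section Twisted.
Variables (iota : {lrmorphism E -> E}) (iotainv : E -> E).
Hypotheses (iotaK : cancel iota iotainv) (iotainvK : cancel iotainv iota).
Variables (r : nat) (iotai : forall i : 'I_r', 'End(V i)).
Hypotheses (Vtw : forall i : 'I_r', (i < r)%N <-> exists j : 'End(V i), twisting iota j)
  (iotaiP : forall i : 'I_r', (i < r)%N -> twisting iota (iotai i)).

Definition lin_iotainv : {linear E -> E} :=
  HB.pack iotainv (GRing.isLinear.Build F E E _ iotainv (can2_linear iotaK iotainvK)).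

Lemma iotainvM x y : iotainv (x * y) = iotainv x * iotainv y.
Proof. by rewrite -{1}[x]iotainvK -{1}[y]iotainvK -rmorphM iotaK. Qed.

(* [V j] twisted by [iota]: a twisting map of [V j] is an isomorphism from this
   module onto [V j]. *)
Definition rho_tw j : {linear E -> 'End(V j)} := (rho j \o lin_iotainv)%FUN.

Lemma rho_twE j e : rho_tw j e = rho j (iotainv e).
Proof. by []. Qed.

Lemma rho_twM j x y : rho_tw j (x * y) = (rho_tw j x \o rho_tw j y)%VF.
Proof. by rewrite !rho_twE iotainvM rhoM. Qed.

Lemma rho_tw_irr j : act_irreducible (rho_tw j).
Proof.
move=> U U_stable; apply: (@rho_irr j) => e.
by have := U_stable (iota e); rewrite rho_twE iotaK.
Qed.

Lemma avg_twisted j (g : 'End(V j)) : (j < r)%N ->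
  avg b (rho j) (rho_tw j) g = (n / d j * vtrace (iotai j \o g)%VF) *: (iotai j)^-1%VF.
Proof.
move=> lt_jr; have [iotai_bij iotai_tw] := iotaiP lt_jr.
have [_ iotaiVK _] := lbijV iotai_bij.
have rho_tw_conj e : rho_tw j e = ((iotai j)^-1 \o rho j e \o iotai j)%VF.
  have iotai_rho : (iotai j \o rho j (iotainv e) = rho j e \o iotai j)%VF.
    by rewrite -[in RHS](iotainvK e); apply: iotai_tw.
  by rewrite -comp_lfunA -iotai_rho comp_lfunA iotaiVK comp_lfun1l.
have -> : avg b (rho j) (rho_tw j) g =
    ((iotai j)^-1 \o avg b (rho j) (rho j) (iotai j \o g))%VF.
  by rewrite comp_lfun_sumr; apply: eq_bigr => y _; rewrite rho_tw_conj !comp_lfunA.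
by rewrite avg_orth_eq -comp_lfunZr comp_lfun1r.
Qed.

Lemma avg_untwistable j (g : 'End(V j)) : ~~ (j < r)%N ->
  avg b (rho j) (rho_tw j) g = 0.
Proof.
move=> not_lt_jr; have Q_hom := avg_hom dimEw sumEw mulEw bE bnz (rhoM j) (rho_twM j) g.
have [//|Q_bij] := schur (@rho_irr j) (@rho_tw_irr j) Q_hom.
set Q := avg _ _ _ g in Q_hom Q_bij *; have [QV_bij QVK QKV] := lbijV Q_bij.
case/negP: not_lt_jr; apply/Vtw; exists Q^-1%VF; split => // e.
have Q_homE : (rho j e \o Q = Q \o rho j (iota e))%VF.
  by have := Q_hom (iota e); rewrite rho_twE iotaK.
rewrite -[LHS]comp_lfun1r -QKV comp_lfunA -(comp_lfunA _ (rho j e)) Q_homE.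
by rewrite comp_lfunA QVK comp_lfun1l.
Qed.

Lemma vtrace_avg_twisted j (X Y : E) :
  \sum_y vtrace (rho j ((b y)^-1 * (X * iotainv (b y) * Y))) =
  vtrace (avg b (rho j) (rho_tw j) (rho j Y) \o rho j X)%VF.
Proof.
rewrite comp_lfun_suml linear_sum; apply: eq_bigr => y _.
by rewrite rho_twE !rhoM vtrace_comp -!comp_lfunA vtrace_comp !comp_lfunA.
Qed.

Lemma twisted_trace_formula (X Y : E) :
  \sum_(i < r' | (i < r)%N)
     vtrace (rho i Y \o iotai i)%VF * vtrace ((iotai i)^-1%VF \o rho i X)%VF
  = vtrace (linfun (fun e => X * iotainv e * Y)).
Proof.
have kappa_linear : linear (fun e => X * iotainv e * Y).
  by move=> a u v; rewrite (can2_linear iotaK iotainvK) mulrDr mulrDl -scalerAr -scalerAl.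
symmetry; rewrite vtrace_tau; under eq_bigr do rewrite linfunE //.
rewrite /tau -mulr_sumr exchange_big.
under eq_bigr do rewrite -mulr_sumr vtrace_avg_twisted.
rewrite mulr_sumr (bigID (fun j : 'I_r' => (j < r)%N)) /= [X in _ + X]big1 ?addr0.
  apply: eq_bigr => j lt_jr.
  rewrite avg_twisted // -comp_lfunZl linearZ /= (vtrace_comp (iotai j)).
  by field; rewrite order_neq0 dimV_neq0.
by move=> j not_lt_jr; rewrite avg_untwistable // comp_lfun0l linear0 !mulr0.
Qed.

End Twisted.

End Orthogonality.

Theorem mainTheorem14
  (F : closedFieldType) (charF0 : [pchar F] =i pred0)
  (gT : finGroupType)
  (E : falgType F)
  (Ew : gT -> {vspace E})
  (dimEw : forall w, \dim (Ew w) = 1%N)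
  (sumEw : (\sum_(w : gT) Ew w)%VS = fullv)
  (dirEw : directv (\sum_(w : gT) Ew w))
  (mulEw : forall w y, (Ew w * Ew y)%VS = Ew (w * y)%g)
  (b : gT -> E) (bE : forall w, b w \in Ew w) (bnz : forall w, b w != 0)
  (iota : {lrmorphism E -> E}) (iotainv : E -> E)
  (iotaK : cancel iota iotainv) (iotainvK : cancel iotainv iota)
  (r r' : nat) (le_rr' : (r <= r')%N)
  (V : 'I_r' -> Emod E)
  (Vsimple : forall i, simple_Emod (V i))
  (Vnoniso : forall i j, Emod_iso (V i) (V j) -> i = j)
  (Vall : forall M : Emod E, simple_Emod M -> exists i, Emod_iso M (V i))
  (Vtw : forall i : 'I_r', (i < r)%N <-> exists j : 'End(V i), twisting iota j)
  (iotai : forall i : 'I_r', 'End(V i))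
  (iotaiP : forall i : 'I_r', (i < r)%N -> twisting iota (iotai i)) :
  forall w w' : gT,
    \sum_(i < r' | (i < r)%N)
       vtrace (Eact (V i) (b w) \o iotai i)%VF
       * vtrace ((iotai i)^-1%VF \o Eact (V i) (b w')^-1%R)%VF
    = vtrace (linfun (fun e : E => (b w')^-1 * iotainv e * b w)).
Proof.
move=> w w'.
exact: (@twisted_trace_formula F gT E charF0 Ew dimEw sumEw mulEw b bE bnz r' V
  Vsimple Vnoniso Vall iota iotainv iotaK iotainvK r iotai Vtw iotaiP (b w')^-1 (b w)).
Qed.
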